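(* Let $X$ be a topological space and $f\colon X\to\mathbb{R}^d$ an injective function. Suppose that the image $f(X)$ is not contained in an affine line in $\mathbb{R}^d$. Then $\alpha(f)=0$ if and only if $f$ is continuous.
   Context: $\mathrm{Conf}_2(X)=\{(x,y)\in X\times X: x\neq y\}$ with the subspace topology. $S^{d-1}$ carries the geodesic metric $d(u,v)=\arccos\langle u,v\rangle$. For a topological space $X$ and a metric space $Y$, $\delta(g)=\inf\{\delta\ge 0 : \text{for every } x\in X \text{ there is an open neighborhood } U_x \text{ of } x \text{ with } \operatorname{diam}(g(U_x))\le\delta\}$. For injective $f\colon X\to\mathbb{R}^d$, $\Phi_f\colon\mathrm{Conf}_2(X)\to S^{d-1}$, $\Phi_f(x,y)=\frac{f(x)-f(y)}{\|f(x)-f(y)\|}$, and $\alpha(f)=\delta(\Phi_f)$. *)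

From HB Require Import structures.
From mathcomp Require Import all_boot all_order all_algebra.
From mathcomp Require Import all_classical all_reals all_analysis.
Set Implicit Arguments. Unset Strict Implicit. Unset Printing Implicit Defensive.
Import Order.TTheory GRing.Theory Num.Theory numFieldNormedType.Exports.
Local Open Scope classical_set_scope.
Local Open Scope ring_scope.

Section Defs.
Context {R : realType} {d : nat}.

Definition dotp (u v : 'rV[R]_d) : R := \sum_(i < d) u ord0 i * v ord0 i.
Definition enorm (u : 'rV[R]_d) : R := Num.sqrt (dotp u u).

Definition geod (u v : 'rV[R]_d) : R := acos (dotp u v).

(* Conf_2(X) as a subset of X * X (it carries the subspace topology) *)
Definition Conf2 (X : Type) : set (X * X) := [set p | p.1 <> p.2].

(* Gauss map Phi_f (only meaningful on Conf_2 X, where f x <> f y when f injective) *)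
Definition Phi (X : Type) (f : X -> 'rV[R]_d) (p : X * X) : 'rV[R]_d :=
  (enorm (f p.1 - f p.2))^-1 *: (f p.1 - f p.2).

Definition gdiam (T : Type) (g : T -> 'rV[R]_d) (A : set T) : \bar R :=
  ereal_sup [set (geod (g a) (g b))%:E | a in A & b in A].

(* delta(g) for g : Conf_2(X) -> S^{d-1}; open neighborhoods in the subspace
   topology of Conf_2(X) are exactly the sets U `&` (@Conf2 X) with U open in X * X
   and containing the point. *)
Definition deltaConf (X : topologicalType) (g : X * X -> 'rV[R]_d) : \bar R :=
  ereal_inf [set (e%:E)%E | e in
    [set e : R | 0 <= e /\
      forall p, (@Conf2 X) p ->
        exists U : set (X * X), [/\ open U, U p &
          (gdiam g (U `&` (@Conf2 X)) <= e%:E)%E]]].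

Definition alpha (X : topologicalType) (f : X -> 'rV[R]_d) : \bar R :=
  deltaConf (Phi f).

Definition in_affine_line (X : Type) (f : X -> 'rV[R]_d) : Prop :=
  exists (a v : 'rV[R]_d), v <> 0 /\ forall x, exists t : R, f x = a + t *: v.

End Defs.

Set Warnings "-notation-overridden,-ambiguous-paths,-notation-incompatible-prefix".
From HB Require Import structures.
From mathcomp Require Import all_boot all_order all_algebra.
From mathcomp Require Import all_classical all_reals all_analysis.
From mathcomp Require Import ring lra.
Import Order.TTheory GRing.Theory Num.Theory numFieldNormedType.Exports.
Local Open Scope classical_set_scope.
Local Open Scope ring_scope.

(* If f is continuous then so is Phi_f on Conf_2(X), hence pairs of
   configurations close to a given one have nearly equal directions and
   alpha(f) = 0.  Conversely, alpha(f) = 0 means that Phi_f(x, o) -> Phi_f(x0, o)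
   as x -> x0, for any o that x eventually avoids.  Since f(X) is not contained
   in a line there are y, z with f(x0), f(y), f(z) not collinear; f(x) is then
   the intersection of the lines through f(y) and f(z) with directions
   Phi_f(x, y) and Phi_f(x, z), and this intersection depends continuously on
   the two directions, so f(x) -> f(x0). *)

Section Dotp.
Context {R : realType} {d : nat}.
Implicit Types (u v w : 'rV[R]_d).

Lemma dotpC u v : dotp u v = dotp v u.
Proof. by apply: eq_bigr => i _; rewrite mulrC. Qed.

Lemma dotpDl u v w : dotp (u + v) w = dotp u w + dotp v w.
Proof. by rewrite /dotp -big_split; apply: eq_bigr => i _; rewrite mxE mulrDl. Qed.

Lemma dotpZl (a : R) u v : dotp (a *: u) v = a * dotp u v.
Proof. by rewrite /dotp mulr_sumr; apply: eq_bigr => i _; rewrite mxE mulrA. Qed.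

Lemma dotpNl u v : dotp (- u) v = - dotp u v.
Proof. by rewrite -scaleN1r dotpZl mulN1r. Qed.

Lemma dotpBl u v w : dotp (u - v) w = dotp u w - dotp v w.
Proof. by rewrite dotpDl dotpNl. Qed.

Lemma dotpZr (a : R) u v : dotp u (a *: v) = a * dotp u v.
Proof. by rewrite dotpC dotpZl dotpC. Qed.

Lemma dotpBr u v w : dotp u (v - w) = dotp u v - dotp u w.
Proof. by rewrite dotpC dotpBl !(dotpC u). Qed.

Lemma dotp_ge0 u : 0 <= dotp u u.
Proof. by apply: sumr_ge0 => i _; rewrite -expr2 sqr_ge0. Qed.

Lemma dotp_eq0 u : (dotp u u == 0) = (u == 0).
Proof.
apply/eqP/eqP => [|->]; last by rewrite /dotp big1 // => i _; rewrite mxE mul0r.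
move=> /psumr_eq0P u0; apply/rowP => i; rewrite mxE.
have /eqP := u0 (fun j _ => sqr_ge0 (u ord0 j)) i isT.
by rewrite mulf_eq0 orbb => /eqP.
Qed.

Lemma enorm_gt0 u : (0 < enorm u) = (u != 0).
Proof. by rewrite sqrtr_gt0 lt_def dotp_ge0 dotp_eq0 andbT. Qed.

Lemma normr_le_enorm u : `|u| <= enorm u.
Proof.
rewrite /Num.Def.normr /= mx_normrE; apply: bigmax_le => [|[i j] _ /=].
  exact: sqrtr_ge0.
rewrite -ler_sqr ?nnegrE ?sqrtr_ge0 // sqr_sqrtr ?dotp_ge0 // real_normK ?num_real //.
rewrite (ord1 i) /dotp (bigD1 j) //= lerDl.
by apply: sumr_ge0 => k _; rewrite -expr2 sqr_ge0.
Qed.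

Definition normalize u : 'rV[R]_d := (enorm u)^-1 *: u.

Lemma scale_enorm_normalize u : enorm u *: normalize u = u.
Proof.
have [->|u0] := eqVneq u 0; first by rewrite /normalize !scaler0.
by rewrite scalerA mulfV ?scale1r // gt_eqF // enorm_gt0.
Qed.

Lemma dotp_normalize {u} : u != 0 -> dotp (normalize u) (normalize u) = 1.
Proof.
rewrite -enorm_gt0 => u0; rewrite dotpZl dotpZr -(sqr_sqrtr (dotp_ge0 u)).
by rewrite -/(enorm u); field; rewrite gt_eqF.
Qed.

Lemma dotp_unit_subr {u v} : dotp u u = 1 -> dotp v v = 1 ->
  dotp (u - v) (u - v) = 2 - 2 * dotp u v.
Proof. by move=> uu vv; rewrite !dotpBl !dotpBr uu vv (dotpC v u); ring. Qed.

Lemma unit_dotp_itv {u v} : dotp u u = 1 -> dotp v v = 1 -> -1 <= dotp u v <= 1.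
Proof.
move=> uu vv; have := dotp_ge0 (u - v); have := dotp_ge0 (u + v).
rewrite dotp_unit_subr // !dotpDl !(dotpC _ (u + v)) !dotpDl uu vv (dotpC v u).
by move=> ? ?; apply/andP; split; lra.
Qed.

Lemma unit_dotp_ge1 {u v} : dotp u u = 1 -> dotp v v = 1 -> 1 <= dotp u v -> u = v.
Proof.
move=> uu vv uv1; apply/eqP; rewrite -subr_eq0 -dotp_eq0 eq_le dotp_ge0 andbT.
by rewrite dotp_unit_subr //; lra.
Qed.

Lemma unit_dotp_sqr1 {u v} : dotp u u = 1 -> dotp v v = 1 ->
  dotp u v ^+ 2 = 1 -> u = dotp u v *: v.
Proof.
move=> uu vv uv1; apply/eqP; rewrite -subr_eq0 -dotp_eq0.
rewrite !dotpBl !dotpBr !dotpZl !dotpZr uu vv (dotpC v u).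
by rewrite mulr1 -expr2 uv1 !subrr.
Qed.

Lemma geod_le (u v : 'rV[R]_d) (e : R) : dotp u u = 1 -> dotp v v = 1 ->
  0 <= e <= pi -> (geod u v <= e) = (cos e <= dotp u v).
Proof.
move=> uu vv e0pi; have [/andP[a0 api] cos_acos] := acos_def (unit_dotp_itv uu vv).
by rewrite /geod -{2}cos_acos [in RHS]leNgt ltr_cos ?leNgt // in_itv /= ?a0.
Qed.

End Dotp.

Section DotpCvg.
Context {R : realType} {d : nat} {T : Type} {F : set_system T}.
Implicit Types (u v w : T -> 'rV[R]_d).

Lemma cvg_dotp {FF : Filter F} {u v} {u0 v0 : 'rV[R]_d} :
  u @ F --> u0 -> v @ F --> v0 -> dotp (u t) (v t) @[t --> F] --> dotp u0 v0.
Proof.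
move=> uu0 vv0; apply: cvg_big => [|i _]; first exact: add_continuous.
have coord w (w0 : 'rV[R]_d) : w @ F --> w0 -> w t ord0 i @[t --> F] --> w0 ord0 i.
  by move=> ww0; exact: (cvg_comp _ _ ww0 (@coord_continuous R 1 d ord0 i w0)).
exact: cvgM (coord _ _ uu0) (coord _ _ vv0).
Qed.

Lemma cvg_normalize {FF : Filter F} {w} {w0 : 'rV[R]_d} :
  w0 != 0 -> w @ F --> w0 -> normalize (w t) @[t --> F] --> normalize w0.
Proof.
move=> w00 ww0; apply: cvgZ; last exact: ww0.
apply: cvgV; first by rewrite gt_eqF ?enorm_gt0.
exact: (cvg_comp _ _ (cvg_dotp ww0 ww0) (@sqrt_continuous R _)).
Qed.

Lemma cvg_unit {FF : Filter F} u (u0 : 'rV[R]_d) : dotp u0 u0 = 1 ->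
  (\forall t \near F, dotp (u t) (u t) = 1) ->
  (forall eta, 0 < eta -> \forall t \near F, 1 - eta <= dotp u0 (u t)) ->
  u @ F --> u0.
Proof.
move=> u01 u1 near_u0; apply/cvgrPdist_lt => e e0.
have e20 : 0 < e ^+ 2 / 4 by rewrite divr_gt0 ?exprn_gt0.
near=> t; apply: le_lt_trans (normr_le_enorm _) _.
rewrite -ltr_sqr ?nnegrE ?sqrtr_ge0 ?ltW // sqr_sqrtr ?dotp_ge0 //.
rewrite dotp_unit_subr //; last by near: t.
suff : 1 - e ^+ 2 / 4 <= dotp u0 (u t) by lra.
by near: t; apply: near_u0.
Unshelve. all: by end_near.
Qed.

End DotpCvg.

Section Free2.
Context {R : realType} {d : nat}.
Implicit Types (a b : 'rV[R]_d).

Definition free2 a b := forall s t : R, s *: a + t *: b = 0 -> s = 0 /\ t = 0.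

Lemma free2C {a b} : free2 a b -> free2 b a.
Proof. by move=> ab s t; rewrite addrC => /ab []. Qed.

Lemma free2_neq0 {a b} : free2 a b -> a != 0.
Proof.
move=> ab; apply/eqP => a0.
have [] : (1 : R) = 0 /\ (0 : R) = 0 by apply: ab; rewrite a0 scaler0 scale0r addr0.
by move=> /eqP; rewrite oner_eq0.
Qed.

Lemma free2_neq {a b} : free2 a b -> a != b.
Proof.
move=> ab; apply/eqP => ab_eq.
have [] : (1 : R) = 0 /\ (-1 : R) = 0 by apply: ab; rewrite ab_eq scaleN1r scale1r subrr.
by move=> /eqP; rewrite oner_eq0.
Qed.

Lemma free2_dotp_normalize {a b} : free2 a b ->
  dotp (normalize a) (normalize b) ^+ 2 != 1.
Proof.
move=> ab; have a0 := free2_neq0 ab; have b0 := free2_neq0 (free2C ab).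
apply/eqP => /(unit_dotp_sqr1 (dotp_normalize a0) (dotp_normalize b0)).
rewrite /normalize scalerA => /eqP; rewrite -subr_eq0 => /eqP.
rewrite -scaleNr => /ab [/eqP]; rewrite invr_eq0 => /eqP a_0 _.
by move: a0; rewrite -enorm_gt0 a_0 ltxx.
Qed.

Lemma free2_normalize_subr {a b} : free2 a b -> normalize (a - b) != normalize a.
Proof.
move=> ab; apply/eqP => /eqP; rewrite /normalize -subr_eq0 => /eqP E.
have : ((enorm (a - b))^-1 - (enorm a)^-1) *: a + (- (enorm (a - b))^-1) *: b = 0.
  by rewrite scalerBl scaleNr addrAC -scalerBr.
move=> /ab [_ /eqP]; rewrite oppr_eq0 invr_eq0 => /eqP ab0.
by move: (free2_neq ab); rewrite -subr_eq0 -enorm_gt0 ab0 ltxx.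
Qed.

End Free2.

Section Triangulation.
Context {R : realType} {d : nat}.
Implicit Types (c p P Q u v : 'rV[R]_d).

(* If p = P + s u = Q + t v with unit vectors u and v, taking the dot product
   of s u - t v = Q - P with u and with v gives two linear equations for s, t. *)
Definition triangulate P Q u v : 'rV[R]_d :=
  P + ((dotp u (Q - P) - dotp u v * dotp v (Q - P)) / (1 - dotp u v ^+ 2)) *: u.

Lemma triangulateE P Q u v (s t : R) : dotp u u = 1 -> dotp v v = 1 ->
  dotp u v ^+ 2 != 1 -> P + s *: u = Q + t *: v ->
  triangulate P Q u v = P + s *: u.
Proof.
move=> uu vv uv1 E; have QP : Q - P = s *: u - t *: v.
  by apply/rowP => i; move/rowP: E => /(_ i); rewrite !mxE; lra.
rewrite /triangulate QP !dotpBr !dotpZr uu vv (dotpC v u); congr (_ + _ *: _).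
by field; rewrite subr_eq0 eq_sym.
Qed.

Lemma triangulate_normalize {p P Q} : p != P -> p != Q ->
  dotp (normalize (p - P)) (normalize (p - Q)) ^+ 2 != 1 ->
  triangulate P Q (normalize (p - P)) (normalize (p - Q)) = p.
Proof.
rewrite -!(subr_eq0 p) => pP pQ uv1.
rewrite (triangulateE P Q _ _ (enorm (p - P)) (enorm (p - Q))) ?dotp_normalize //.
  by rewrite scale_enorm_normalize addrC subrK.
by rewrite !scale_enorm_normalize [P + _]addrC [Q + _]addrC !subrK.
Qed.

Lemma cvg_triangulate {T} {F : set_system T} {FF : Filter F} P Q
    {u v : T -> 'rV[R]_d} {u0 v0} :
  dotp u0 v0 ^+ 2 != 1 -> u @ F --> u0 -> v @ F --> v0 ->
  triangulate P Q (u t) (v t) @[t --> F] --> triangulate P Q u0 v0.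
Proof.
move=> uv1 uu0 vv0.
have uv : dotp (u t) (v t) @[t --> F] --> dotp u0 v0 by exact: cvg_dotp.
apply: cvgD; first exact: cvg_cst.
apply: cvgZ; last exact: uu0.
apply: cvgM.
  apply: cvgB; first exact: (cvg_dotp uu0 (cvg_cst (Q - P))).
  by apply: cvgM; [exact: uv | exact: (cvg_dotp vv0 (cvg_cst (Q - P)))].
apply: cvgV; first by rewrite subr_eq0 eq_sym.
by apply: cvgB; [exact: cvg_cst | exact: (cvgM uv uv)].
Qed.

Lemma cvg_triangulation {T} {F : set_system T} {FF : Filter F} (p : T -> 'rV[R]_d)
    {c P Q} :
  free2 (c - P) (c - Q) -> (\forall t \near F, p t != P /\ p t != Q) ->
  normalize (p t - P) @[t --> F] --> normalize (c - P) ->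
  normalize (p t - Q) @[t --> F] --> normalize (c - Q) ->
  p @ F --> c.
Proof.
move=> cPQ pPQ uu0 vv0; have uv1 := free2_dotp_normalize cPQ.
have cP : c != P by rewrite -subr_eq0 (free2_neq0 cPQ).
have cQ : c != Q by rewrite -subr_eq0 (free2_neq0 (free2C cPQ)).
rewrite -(triangulate_normalize cP cQ uv1).
apply: cvg_trans (cvg_triangulate P Q uv1 uu0 vv0); apply: near_eq_cvg.
have : 1 - dotp (normalize (p t - P)) (normalize (p t - Q)) ^+ 2 @[t --> F] -->
    1 - dotp (normalize (c - P)) (normalize (c - Q)) ^+ 2.
  by apply: cvgB; [exact: cvg_cst | exact: (cvgM (cvg_dotp uu0 vv0) (cvg_dotp uu0 vv0))].
move=> /cvgr_neq0; rewrite subr_eq0 eq_sym => /(_ uv1).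
apply: filterS2 pPQ => t [pP pQ]; rewrite subr_eq0 eq_sym => uv1t.
by rewrite triangulate_normalize.
Qed.

End Triangulation.

Section DeltaConf.
Context {R : realType} {d : nat} {X : topologicalType} {g : X * X -> 'rV[R]_d}.

Lemma deltaConf_eq0 :
  (forall e, 0 < e -> forall p, Conf2 p -> exists U, [/\ open U, U p &
     forall a b, U a -> U b -> Conf2 a -> Conf2 b -> geod (g a) (g b) <= e]) ->
  deltaConf g = 0%E.
Proof.
move=> small_U; apply/eqP; rewrite eq_le; apply/andP; split; last first.
  by apply/ereal_infP => _ [e [e0 _] <-]; rewrite lee_fin.
apply/lee_addgt0Pr => e e0; rewrite add0e.
apply: ge_ereal_inf; exists e%:E => //; exists e => //; split; first exact: ltW.
move=> p Cp; have [U [oU Up gU]] := small_U e e0 p Cp.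
exists U; split => //; apply: ge_ereal_sup => _ [a [Ua Ca] [b [Ub Cb] <-]].
by rewrite lee_fin gU.
Qed.

Lemma deltaConf_eq0_geod_le {e p} : deltaConf g = 0%E -> 0 < e -> Conf2 p ->
  exists U, [/\ open U, U p & forall q, U q -> Conf2 q -> geod (g p) (g q) <= e].
Proof.
move=> g0 e0 Cp; have : (deltaConf g < e%:E)%E by rewrite g0 lte_fin.
move=> /ereal_inf_lt [_ [e' [_ small_U] <-]]; rewrite lte_fin => e'e.
have [U [oU Up gU]] := small_U p Cp; exists U; split => // q Uq Cq.
have : ((geod (g p) (g q))%:E <= gdiam g (U `&` @Conf2 X))%E.
  by apply: ereal_sup_ubound; exists p => //; exists q.
by move=> /le_trans /(_ gU); rewrite lee_fin => /le_trans; apply; exact: ltW.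
Qed.

End DeltaConf.

Section Phi.
Context {R : realType} {d : nat} {X : topologicalType} {f : X -> 'rV[R]_d}.

Lemma dotp_Phi {p} : f p.1 != f p.2 -> dotp (Phi f p) (Phi f p) = 1.
Proof. by rewrite -subr_eq0 => /dotp_normalize. Qed.

Lemma inj_Conf2_neq {p} : injective f -> Conf2 p -> f p.1 != f p.2.
Proof. by move=> finj Cp; apply/eqP => /finj. Qed.

Lemma near_pair {U : set (X * X)} {x0 o : X} :
  open U -> U (x0, o) -> \forall x \near x0, U (x, o).
Proof.
move=> oU Ux0; have : (x, o) @[x --> x0] --> (x0, o).
  by apply: cvg_pair; [exact: cvg_id | exact: cvg_cst].
by apply; apply: open_nbhs_nbhs.
Qed.

Lemma Phi_dotp_nbhs {p} {eta : R} : continuous f -> f p.1 != f p.2 -> 0 < eta ->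
  exists U, [/\ open U, U p &
    forall a b, U a -> U b -> 1 - eta < dotp (Phi f a) (Phi f b)].
Proof.
move=> fc fp eta0.
have cvg_Phi : Phi f q @[q --> p] --> Phi f p.
  apply: cvg_normalize; first by rewrite subr_eq0.
  have fst_p : (fun q : X * X => q.1) @ p --> p.1 by exact: cvg_fst.
  have snd_p : (fun q : X * X => q.2) @ p --> p.2 by exact: cvg_snd.
  apply: cvgB; first exact: (cvg_comp _ _ fst_p (fc p.1)).
  exact: (cvg_comp _ _ snd_p (fc p.2)).
have : dotp (Phi f ab.1) (Phi f ab.2) @[ab --> (p, p)] --> (1 : R).
  rewrite -(dotp_Phi fp); apply: cvg_dotp.
    exact: (cvg_comp _ _ cvg_fst cvg_Phi).
  exact: (cvg_comp _ _ cvg_snd cvg_Phi).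
move=> /cvgrPdist_lt /(_ eta eta0) [[A B] /= [nA nB] AB].
have : nbhs p (A `&` B) by apply: filterI.
rewrite nbhsE => -[V [oV Vp] VAB]; exists V; split => // a b Va Vb.
have [[Aa _] [_ Bb]] := (VAB a Va, VAB b Vb).
by have := AB (a, b) (conj Aa Bb); rewrite /= ltr_norml => /andP[]; lra.
Qed.

Lemma alpha_eq0_of_continuous : injective f -> continuous f -> alpha f = 0%E.
Proof.
move=> finj fc; apply: deltaConf_eq0 => e e0 p Cp.
pose e' := Num.min e pi.
have e'0 : 0 < e' by rewrite lt_min e0 pi_gt0.
have e'pi : e' <= pi by rewrite ge_min lexx orbT.
have cos_e' : cos e' < 1.
  by rewrite -cos0 ltr_cos // in_itv /= ?lexx ?pi_ge0 ?(ltW e'0).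
rewrite -subr_gt0 in cos_e'.
have [U [oU Up near1]] := Phi_dotp_nbhs fc (inj_Conf2_neq finj Cp) cos_e'.
exists U; split => // a b Ua Ub Ca Cb.
apply: (@le_trans _ _ e'); last by rewrite ge_min lexx.
rewrite geod_le ?dotp_Phi ?inj_Conf2_neq ?(ltW e'0) //.
by have := near1 a b Ua Ub; lra.
Qed.

Lemma alpha_eq0_near_dotp {x0 o : X} {eta : R} : injective f -> alpha f = 0%E ->
  x0 != o -> 0 < eta ->
  \forall x \near x0, x != o -> 1 - eta <= dotp (Phi f (x0, o)) (Phi f (x, o)).
Proof.
move=> finj a0 x0o eta0.
have C0 : Conf2 (x0, o) by apply/eqP.
set k := Num.max (1 - eta) (-1).
have k1 : k < 1 by rewrite gt_max; apply/andP; split; lra.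
have k_itv : -1 <= k <= 1 by rewrite le_max lexx orbT (ltW k1).
have acos_itv : 0 <= acos k <= pi by rewrite acos_ge0 ?acos_lepi.
have acos0 : 0 < acos k by apply: acos_gt0; rewrite le_max lexx orbT.
have [U [oU Up gU]] := deltaConf_eq0_geod_le a0 acos0 C0.
move: (near_pair oU Up); apply: filterS => x Ux xo.
have Cx : Conf2 (x, o) by apply/eqP.
have := gU _ Ux Cx; rewrite geod_le ?dotp_Phi ?inj_Conf2_neq // acosK ?in_itv //.
by apply: le_trans; rewrite le_max lexx.
Qed.


Lemma alpha_eq0_cvg_Phi {x0 o : X} : injective f -> alpha f = 0%E ->
  (\forall x \near x0, x != o) -> Phi f (x, o) @[x --> x0] --> Phi f (x0, o).
Proof.
move=> finj a0 near_o; have x0o : x0 != o := nbhs_singleton near_o.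
apply: cvg_unit; first by rewrite dotp_Phi // (inj_eq finj).
  by apply: filterS near_o => x xo; rewrite dotp_Phi // (inj_eq finj).
move=> eta eta0; move: near_o (alpha_eq0_near_dotp finj a0 x0o eta0).
by apply: filterS2 => x xo; apply.
Qed.

(* X need not be T1: were y in every neighbourhood of x0, alpha(f) = 0 would
   give Phi_f(y, z) = Phi_f(x0, z), against non-collinearity. *)
Lemma alpha_eq0_near_neq {x0 y z : X} : injective f -> alpha f = 0%E ->
  free2 (f x0 - f z) (f x0 - f y) -> \forall x \near x0, x != y.
Proof.
move=> finj a0 xzy.
have fx0z : f x0 != f z by rewrite -subr_eq0 (free2_neq0 xzy).
have fyz : f y != f z by apply: contra_neq (free2_neq xzy) => ->.
have x0z : x0 != z by rewrite -(inj_eq finj).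
have yz : y != z by rewrite -(inj_eq finj).
apply: contrapT => not_near.
have y_near : forall A, nbhs x0 A -> A y.
  move=> A nA; apply: contrapT => Ay; apply: not_near.
  by apply: filterS nA => x Ax; apply/eqP => xy; apply: Ay; rewrite -xy.
have : 1 <= dotp (Phi f (x0, z)) (Phi f (y, z)).
  apply/ler_addgt0Pr => eta eta0.
  by have := y_near _ (alpha_eq0_near_dotp finj a0 x0z eta0) yz; lra.
have [x0z1 yz1] := (dotp_Phi (p := (x0, z)) fx0z, dotp_Phi (p := (y, z)) fyz).
move=> /(unit_dotp_ge1 x0z1 yz1) Phi_eq.
apply: (negP (free2_normalize_subr xzy)).
have -> : f x0 - f z - (f x0 - f y) = f y - f z by rewrite opprB addrC addrA subrK.
by apply/eqP; exact: esym Phi_eq.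
Qed.

End Phi.

Lemma not_in_affine_line_free2 {R : realType} {d : nat} {T : Type}
    {f : T -> 'rV[R]_d} {x0 y : T} :
  ~ in_affine_line f -> f y != f x0 -> exists z, free2 (f x0 - f y) (f x0 - f z).
Proof.
move=> nline yx0; apply: contrapT => no_z; apply: nline.
exists (f x0), (f x0 - f y); split; first by apply/eqP; rewrite subr_eq0 eq_sym.
move=> x; have [s [t [st0 nst]]] : exists s t : R,
    s *: (f x0 - f y) + t *: (f x0 - f x) = 0 /\ ~ (s = 0 /\ t = 0).
  apply: contrapT => H; apply: no_z; exists x => s t st0.
  by apply: contrapT => nst; apply: H; exists s, t.
have [t0|t0] := eqVneq t 0.
  move: st0; rewrite t0 scale0r addr0 => /eqP.
  rewrite scaler_eq0 subr_eq0 [_ == f y]eq_sym (negbTE yx0) orbF => /eqP s0.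
  by case: nst.
exists (s / t); apply/rowP => i; move/rowP: st0 => /(_ i); rewrite !mxE => st0.
apply: (mulfI t0); rewrite mulrDr mulrA mulrCA divff // mulr1; lra.
Qed.

Lemma continuous_of_alpha_eq0 {R : realType} {d : nat} {X : topologicalType}
    (f : X -> 'rV[R]_d) :
  injective f -> ~ in_affine_line f -> alpha f = 0%E -> continuous f.
Proof.
move=> finj nline a0 x0.
have [[y yx0]|fcst] := pselect (exists y, f y != f x0); last first.
  suff -> : f = fun=> f x0 by exact: cvg_cst.
  by apply: funext => y; apply/eqP; apply: contrapT => /negP yx0; apply: fcst; exists y.
have [z yz] := not_in_affine_line_free2 nline yx0.
have near_y := alpha_eq0_near_neq finj a0 (free2C yz).
have near_z := alpha_eq0_near_neq finj a0 yz.
apply: (cvg_triangulation f yz).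
- by apply: filterS2 near_y near_z => x xy xz; rewrite !(inj_eq finj).
- exact: alpha_eq0_cvg_Phi finj a0 near_y.
- exact: alpha_eq0_cvg_Phi finj a0 near_z.
Qed.

Theorem theorem3p7 (R : realType) (d : nat) (X : topologicalType)
    (f : X -> 'rV[R]_d) :
  injective f -> ~ in_affine_line f ->
  (alpha f = 0%E <-> continuous f).
Proof.
move=> finj nline; split => [a0 | fc].
  exact: continuous_of_alpha_eq0 finj nline a0.
exact: alpha_eq0_of_continuous finj fc.
Qed.
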